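(* Let $\mathcal{G}$ be an undirected weighted graph (nonzero real weights, possibly negative) with $c$ connected components, and suppose $L(\mathcal{G})$ has $n_+$ positive, $n_-$ negative and $n_0$ zero eigenvalues. Then for any spanning forest $\mathcal{F}$ with cycle subgraph $\mathcal{C}$, the symmetric matrix $R_{(\mathcal{F},\mathcal{C})}WR_{(\mathcal{F},\mathcal{C})}^T$ has $n_+$ positive, $n_-$ negative and $n_0-c$ zero eigenvalues.
   Context: A weighted graph $\mathcal{G}=(\mathcal{V},\mathcal{E},\mathcal{W})$ has weights $\mathcal{W}:\mathcal{E}\to\mathbb{R}\setminus\{0\}$ collected in the diagonal matrix $W$. With an arbitrary edge orientation, the incidence matrix $E$ has in the column of edge $(i,j)$ entry $+1$ in row $i$, $-1$ in row $j$, $0$ elsewhere; $L(\mathcal{G})=EWE^T$. A spanning forest $\mathcal{F}$ is an acyclic subgraph containing a spanning tree of each component; $\mathcal{C}$ consists of the remaining edges; edges ordered so $E=[E_{\mathcal{F}}\ E_{\mathcal{C}}]$ and $W$ correspondingly. $L_e(\mathcal{F})=E_{\mathcal{F}}^TE_{\mathcal{F}}$ and $R_{(\mathcal{F},\mathcal{C})}=[\,I\ \ L_e(\mathcal{F})^{-1}E_{\mathcal{F}}^TE_{\mathcal{C}}\,]$. *)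

From HB Require Import structures.
From mathcomp Require Import all_boot all_order all_algebra.
Set Implicit Arguments. Unset Strict Implicit. Unset Printing Implicit Defensive.
Import Order.TTheory GRing.Theory Num.Theory.
Local Open Scope ring_scope.

(* A graph on vertices 'I_n with m edges; edge e is oriented from src e to dst e. *)
Section Graph.
Variables (n m : nat) (src dst : 'I_m -> 'I_n).

Definition joins (e : 'I_m) (x y : 'I_n) : bool :=
  ((src e == x) && (dst e == y)) || ((src e == y) && (dst e == x)).

Definition adj (S : pred 'I_m) : rel 'I_n :=
  fun x y => [exists e, S e && joins e x y].

Definition has_cycle (S : pred 'I_m) : Prop :=
  exists (p : nat) (es : 'I_p.+1 -> 'I_m) (vs : 'I_p.+1 -> 'I_n),
    [/\ injective es, injective vs &
        forall i, S (es i) /\ joins (es i) (vs i) (vs (ordS i))].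

Definition incidence (R : pzRingType) : 'M[R]_(n, m) :=
  \matrix_(i, j) ((i == src j)%:R - (i == dst j)%:R).

End Graph.

(* A (square) matrix A over a real closed field has np positive, nn negative
   and nz zero eigenvalues (counted with algebraic multiplicity, all eigenvalues
   being real). *)
Definition eig_inertia (R : rcfType) (d : nat) (A : 'M[R]_d) (np nn nz : nat) : Prop :=
  exists s : seq R,
    [/\ char_poly A = \prod_(x <- s) ('X - x%:P),
        count (fun x => 0 < x) s = np,
        count (fun x => x < 0) s = nn &
        count (fun x => x == 0) s = nz].

From HB Require Import structures.
From mathcomp Require Import all_boot all_order all_algebra.
From mathcomp Require Import complex zify.
Set Implicit Arguments. Unset Strict Implicit. Unset Printing Implicit Defensive.
Import Order.TTheory GRing.Theory Num.Theory.

(* Since F contains a spanning tree of every component, each column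
   of E_C is a combination of columns of E_F, and since F is acyclic E_F has full
   column rank (a nonzero vector of its kernel would be a flow whose support
   contains a cycle).  Hence E = E_F R_(F,C), so L(G) = E_F (R W R^T) E_F^T is a
   congruence by a matrix of full column rank, which preserves the numbers of
   positive and negative eigenvalues (Sylvester; proved with maximal definite
   subspaces and the spectral theorem over R[i]).  Finally rank E = n - c and
   rank E = rank E_F = k, which accounts for the zero eigenvalues. *)

Lemma first_repeat (T : finType) (f : nat -> T) :
  exists i j, [/\ i < j, f i = f j &
    forall a b, a < j -> b < j -> f a = f b -> a = b].
Proof.
have repeats_ex : exists j, has (fun i => f i == f j) (iota 0 j).
  have /injectivePn [t1 [t2 t12 ft12]] : ~~ injectiveb (fun t : 'I_#|T|.+1 => f t).
    by apply/injectiveP => /leq_card; rewrite card_ord ltnn.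
  case: (ltngtP t1 t2) => [lt|lt|/val_inj eq]; last by rewrite eq eqxx in t12.
    by exists t2; apply/hasP; exists (t1 : nat); rewrite ?mem_iota //= ft12.
  by exists t1; apply/hasP; exists (t2 : nat); rewrite ?mem_iota //= ft12.
case: (ex_minnP repeats_ex) => j /hasP; case=> i.
rewrite mem_iota add0n => /andP[_ ij] /eqP fij j_min.
exists i, j; split=> // a b aj bj fab.
wlog ab : a b aj bj fab / a < b.
  by move=> wlog_ab; case: (ltngtP a b) => // [/wlog_ab | /wlog_ab /esym]; apply.
suff : j <= b by rewrite leqNgt bj.
by apply: j_min; apply/hasP; exists a; rewrite ?mem_iota //= fab.
Qed.

Section Walks.
Variables (n m : nat) (src dst : 'I_m -> 'I_n).
Local Notation joins := (joins src dst).

Lemma joins_sym e x y : joins e x y = joins e y x.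
Proof. by rewrite /joins orbC. Qed.

Lemma joins_inv e x y x' y' : joins e x y -> joins e x' y' ->
  (x = x' /\ y = y') \/ (x = y' /\ y = x').
Proof.
by rewrite /joins => /orP[]/andP[/eqP-> /eqP->] /orP[]/andP[/eqP-> /eqP->];
  [left|right|right|left].
Qed.

Lemma adj_sym S : symmetric (adj src dst S).
Proof.
move=> x y; apply/existsP/existsP => -[e /andP[Se]];
  by rewrite joins_sym => xy; exists e; rewrite Se.
Qed.

Lemma closed_walk_has_cycle (S : pred 'I_m) p
    (es : 'I_p.+1 -> 'I_m) (vs : 'I_p.+1 -> 'I_n) :
  injective vs ->
  (forall a, S (es a) /\ joins (es a) (vs a) (vs (ordS a))) ->
  (forall a : 'I_p.+1, a < p -> es (ordS a) != es a) ->
  has_cycle src dst S.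
Proof.
move=> vs_inj walk no_back; exists p, es, vs; split=> // a b eab.
have [_ ja] := walk a; have [_ jb] := walk b; rewrite -eab in jb.
have [[/vs_inj -> _] // | [/vs_inj ab /vs_inj ba]] := joins_inv ja jb.
case: (ltnP a p) => [ap|pa]; first by have := no_back a ap; rewrite ba eab eqxx.
case: (ltnP b p) => [bp|pb]; first by have := no_back b bp; rewrite -ab eab eqxx.
by apply/val_inj => /=; move: (ltn_ord a) (ltn_ord b); lia.
Qed.

Lemma walk_has_cycle (S : pred 'I_m) (v : nat -> 'I_n) (ed : nat -> 'I_m) :
  (forall t, S (ed t)) -> (forall t, ed t.+1 != ed t) ->
  (forall t, joins (ed t.+1) (v t) (v t.+1)) -> has_cycle src dst S.
Proof.
move=> edS no_back walk; have [i [j [ij vij v_inj]]] := first_repeat v.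
pose p := (j - i).-1; have ijp : i + p.+1 = j by rewrite /p prednK; lia.
have ordS_val (a : 'I_p.+1) : val (ordS a) = if a < p then a.+1 else 0.
  case: ifP => ap /=; first by rewrite modn_small.
  have /eqP -> : a == p :> nat by rewrite eqn_leq -ltnS ltn_ord leqNgt ap.
  exact: modnn.
apply: (@closed_walk_has_cycle S p (fun a => ed (i + a).+1) (fun a => v (i + a))).
- move=> a b /v_inj; have := ltn_ord a; have := ltn_ord b.
  by move=> *; apply/val_inj => /=; lia.
- move=> a; split=> //; have := walk (i + a); rewrite ordS_val.
  case: ifP => ap; first by rewrite addnS.
  by rewrite addn0 vij; have -> : (i + a).+1 = j by move: (ltn_ord a) ap; lia.
- by move=> a ap; rewrite ordS_val ap addnS no_back.
Qed.

End Walks.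

Local Open Scope ring_scope.

Section IncidenceMatrix.
Variables (R : fieldType) (n m : nat) (src dst : 'I_m -> 'I_n).
Local Notation E := (incidence src dst R).
Local Notation G := (adj src dst predT).

Lemma mulmx_incidenceE p (A : 'M[R]_(p, n)) i e :
  (A *m E) i e = A i (src e) - A i (dst e).
Proof.
rewrite !mxE; under eq_bigr do rewrite mxE mulrBr !mulr_natr.
rewrite sumrB (bigD1 (src e)) //= big1 ?addr0 => [|v /negbTE -> //].
by rewrite (bigD1 (dst e)) //= big1 ?addr0 ?eqxx => [|v /negbTE -> //].
Qed.

Lemma row_tr_incidence e : row e E^T = delta_mx 0 (src e) - delta_mx 0 (dst e).
Proof. by apply/rowP => v; rewrite !mxE eqxx. Qed.

Lemma left_kernel_incidence_connect p (A : 'M[R]_(p, n)) i x y :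
  A *m E = 0 -> connect G x y -> A i x = A i y.
Proof.
move=> AE /connectP [q xq ->]; elim: q x xq => //= z q IHq x /andP[xz zq].
rewrite -IHq //; case/existsP: xz => e /andP[_ exz].
have /eqP := congr1 (fun B : 'M_(p, m) => B i e) AE.
rewrite mulmx_incidenceE mxE subr_eq0 => /eqP.
by case/orP: exz => /andP[/eqP-> /eqP->].
Qed.

Definition component_roots := [set x | roots G x].

Definition component_mx : 'M[R]_(#|component_roots|, n) :=
  \matrix_(i, x) (fingraph.root G x == enum_val i)%:R.

Lemma component_mx_row_free : row_free component_mx.
Proof.
apply/row_freeP; exists (\matrix_(x, i) (x == enum_val i)%:R).
apply/matrixP => i i'; rewrite !mxE (bigD1 (enum_val i')) //= big1 ?addr0.
  have /[!inE] /eqP root_i' := enum_valP i'.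
  by rewrite !mxE eqxx mulr1 root_i' (inj_eq enum_val_inj) eq_sym.
by move=> x /negbTE x_i'; rewrite !mxE x_i' mulr0.
Qed.

Lemma kermx_incidence : (kermx E == component_mx)%MS.
Proof.
have G_sym : connect_sym G := sym_connect_sym (adj_sym src dst predT).
apply/andP; split; last first.
  rewrite sub_kermx; apply/eqP/matrixP => i e; rewrite mulmx_incidenceE !mxE.
  suff -> : fingraph.root G (src e) = fingraph.root G (dst e) by rewrite subrr.
  apply/(fingraph.rootP G_sym); apply: connect1; apply/existsP; exists e.
  by rewrite /joins !eqxx.
apply/row_subP => i.
have : row i (kermx E) *m E = 0 by rewrite -row_mul mulmx_ker row0.
move: (row i _) => x xE.
apply/submxP; exists (\row_j x 0 (enum_val j)); apply/rowP => v.
have root_v : fingraph.root G v \in component_roots by rewrite inE roots_root.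
rewrite !mxE (bigD1 (enum_rank_in root_v (fingraph.root G v))) //= big1 ?addr0.
  rewrite !mxE enum_rankK_in // eqxx mulr1.
  by apply: (left_kernel_incidence_connect 0 xE); apply: connect_root.
move=> j j_v; rewrite !mxE.
suff /negbTE -> : fingraph.root G v != enum_val j by rewrite mulr0.
apply: contra j_v => /eqP root_j; apply/eqP/enum_val_inj.
by rewrite enum_rankK_in // root_j.
Qed.

Lemma rank_incidence : \rank E = (n - n_comp G predT)%N.
Proof.
have n_comp_roots : n_comp G predT = #|component_roots|.
  by apply: eq_card => v; rewrite !inE andbT.
have := mxrank_ker E; rewrite (eqmx_rank kermx_incidence).
rewrite (eqP component_mx_row_free) n_comp_roots => ->.
by rewrite subKn // rank_leq_row.
Qed.

End IncidenceMatrix.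

Section AcyclicIncidence.
Variables (R : fieldType) (n m : nat) (src dst : 'I_m -> 'I_n).
Hypothesis loop_free : forall e, src e != dst e.
Local Notation E := (incidence src dst R).

Definition incident (v : 'I_n) e := (src e == v) || (dst e == v).
Definition other_end e (v : 'I_n) := if src e == v then dst e else src e.

Section KernelVector.
Variable y : 'cV[R]_m.
Hypothesis Ey : E *m y = 0.
Local Notation supp e := (y e 0 != 0).

(* Flow conservation at [v]: otherwise the [v]-entry of [E *m y] is [+- y e 0]. *)
Lemma kernel_support_other_edge v e : supp e -> incident v e ->
  exists e', [&& supp e', e' != e & incident v e'].
Proof.
move=> ye ve; apply/existsP; apply: contraT => /existsPn no_other.
have /matrixP/(_ v 0) := Ey; rewrite !mxE (bigD1 e) //= big1 ?addr0.
  rewrite !mxE; have := loop_free e; move: ve; rewrite /incident.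
  case: (eqVneq (src e) v) => [<- _ /negbTE -> | sv /= /eqP <- _].
    by rewrite subr0 mul1r => /eqP; rewrite (negbTE ye).
  by rewrite eqxx sub0r mulN1r => /eqP; rewrite oppr_eq0 (negbTE ye).
move=> e' e'e; rewrite !mxE; have := no_other e'; rewrite e'e /=.
case: (eqVneq (y e' 0) 0) => [-> | _]; first by rewrite mulr0.
rewrite /incident negb_or => /andP[sv dv].
by rewrite eq_sym (negbTE sv) eq_sym (negbTE dv) subrr mul0r.
Qed.

Definition kernel_walk_step (s : 'I_n * 'I_m) : 'I_n * 'I_m :=
  let e' := odflt s.2 [pick e' | [&& supp e', e' != s.2 & incident s.1 e']] in
  (other_end e' s.1, e').

Lemma kernel_walk_stepP s : supp s.2 -> incident s.1 s.2 ->
  let s' := kernel_walk_step s in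
  [/\ supp s'.2, incident s'.1 s'.2, s'.2 != s.2 & joins src dst s'.2 s.1 s'.1].
Proof.
case: s => v e /= ye ve; rewrite /kernel_walk_step /=.
case: pickP => [e' /and3P[ye' e'e ve'] | none] /=; last first.
  have [e' /and3P[ye' e'e ve']] := kernel_support_other_edge ye ve.
  by have := none e'; rewrite ye' e'e ve'.
rewrite /incident /other_end /joins; move: ve'; rewrite /incident.
by case: (eqVneq (src e') v) => [-> | _ /= /eqP ->]; rewrite !eqxx ?orbT.
Qed.

Lemma kernel_support_has_cycle e0 : supp e0 -> has_cycle src dst predT.
Proof.
move=> ye0; pose s t := iter t kernel_walk_step (src e0, e0).
have inv t : supp (s t).2 && incident (s t).1 (s t).2.
  elim: t => [|t /andP[yt vt]] /=; first by rewrite ye0 /incident eqxx.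
  by have [-> -> _ _] := kernel_walk_stepP yt vt.
apply: (@walk_has_cycle _ _ src dst predT (fun t => (s t).1) (fun t => (s t).2))
  => // t; by have /andP[yt vt] := inv t; have [] := kernel_walk_stepP yt vt.
Qed.

End KernelVector.

Lemma acyclic_incidence_tr_row_free :
  ~ has_cycle src dst predT -> row_free E^T.
Proof.
move=> acyclic; apply: inj_row_free => v vE; apply/rowP => e; rewrite mxE.
apply/eqP/negPn/negP => ve; apply: acyclic.
apply: (@kernel_support_has_cycle v^T _ e); last by rewrite mxE.
by rewrite -[E]trmxK -trmx_mul vE trmx0.
Qed.

End AcyclicIncidence.

Section SpanningForest.
Variables (R : fieldType) (n k l : nat) (src dst : 'I_(k + l) -> 'I_n).
Local Notation E := (incidence src dst R).
Local Notation F := (adj src dst (fun e => (e < k)%N)).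

Lemma lsubmx_incidence :
  lsubmx E = incidence (fun i => src (lshift l i)) (fun i => dst (lshift l i)) R.
Proof. by apply/matrixP => v i; rewrite !mxE. Qed.

Lemma has_cycle_lshift :
  has_cycle (fun i => src (lshift l i)) (fun i => dst (lshift l i)) predT ->
  has_cycle src dst (fun e => (e < k)%N).
Proof.
case=> p [es [vs [es_inj vs_inj walk]]].
exists p, (fun a => lshift l (es a)), vs; split=> // [a b /lshift_inj /es_inj //|a].
by have [_ ej] := walk a; rewrite /= ltn_ord.
Qed.

Lemma connect_sub_lsubmx_incidence x y : connect F x y ->
  ((delta_mx 0 x - delta_mx 0 y : 'rV[R]_n) <= (lsubmx E)^T)%MS.
Proof.
case/connectP=> q xq ->; elim: q x xq => /= [|z q IHq] x.
  by rewrite subrr sub0mx.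
case/andP=> /existsP[e /andP[ek exz]] zq.
rewrite -(subrKA (delta_mx 0 z)); apply: addmx_sub (IHq _ zq).
have e_ek : e = lshift l (Ordinal ek) by apply: val_inj.
have := row_sub (Ordinal ek) (lsubmx E)^T.
have -> : row (Ordinal ek) (lsubmx E)^T = row e E^T.
  by apply/rowP => v; rewrite !mxE -e_ek.
rewrite row_tr_incidence.
by case/orP: exz => /andP[/eqP-> /eqP->] //; rewrite -opprB eqmx_opp.
Qed.

Lemma spanning_forest_rsubmx_incidence_sub :
  (forall x y, connect F x y = connect (adj src dst predT) x y) ->
  ((rsubmx E)^T <= (lsubmx E)^T)%MS.
Proof.
move=> spanning; apply/row_subP => j.
have -> : row j (rsubmx E)^T = row (rshift k j) E^T.
  by apply/rowP => v; rewrite !mxE.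
rewrite row_tr_incidence; apply: connect_sub_lsubmx_incidence.
rewrite spanning; apply: connect1; apply/existsP; exists (rshift k j).
by rewrite /joins !eqxx.
Qed.

End SpanningForest.

Lemma rank_row_mx_sub (R : fieldType) n k l
    (A : 'M[R]_(n, k)) (B : 'M[R]_(n, l)) :
  (B^T <= A^T)%MS -> \rank (row_mx A B) = \rank A.
Proof.
by move=> BA; rewrite -mxrank_tr tr_row_mx -addsmxE (addsmx_idPl BA) mxrank_tr.
Qed.

Lemma gram_unitmx (R : realFieldType) n k (B : 'M[R]_(n, k)) :
  row_free B^T -> B^T *m B \in unitmx.
Proof.
move=> B_free; rewrite -row_free_unit; apply: inj_row_free => v vBB.
apply/eqP; rewrite -(mulmx_free_eq0 _ B_free); set w := v *m B^T.
have : (w *m w^T) 0 0 = 0.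
  by rewrite trmx_mul trmxK mulmxA -(mulmxA v) vBB mul0mx mxE.
rewrite mxE => /eqP; rewrite psumr_eq0 => [/allP w0|j _]; last first.
  by rewrite !mxE -expr2 sqr_ge0.
apply/eqP/rowP => j; rewrite mxE.
by have := w0 j (mem_index_enum j); rewrite /= !mxE mulf_eq0 orbb => /eqP.
Qed.

Lemma row_mx_pinv_factor (R : realFieldType) n k l
    (A : 'M[R]_(n, k)) (B : 'M[R]_(n, l)) :
  row_free A^T -> (B^T <= A^T)%MS ->
  row_mx A B = A *m row_mx 1%:M (invmx (A^T *m A) *m A^T *m B).
Proof.
move=> A_free /submxP[D BD].
have -> : B = A *m D^T by rewrite -[B]trmxK BD trmx_mul trmxK.
rewrite mul_mx_row mulmx1 !mulmxA -(mulmxA _ A^T A) -(mulmxA A).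
by rewrite mulVmx ?gram_unitmx // mulmx1.
Qed.

Lemma char_poly_conjmx (R : comUnitRingType) n (P D : 'M[R]_n) : P \in unitmx ->
  char_poly (invmx P *m D *m P) = char_poly D.
Proof.
move=> P_unit; rewrite /char_poly /char_poly_mx !map_mxM.
set Pp := map_mx polyC P; set Pi := map_mx polyC (invmx P).
have PiPp : Pi *m Pp = 1%:M by rewrite -map_mxM mulVmx // map_mx1.
have -> : 'X%:M - Pi *m map_mx polyC D *m Pp = Pi *m ('X%:M - map_mx polyC D) *m Pp.
  rewrite mulmxBr mulmxBl; congr (_ - _).
  by rewrite -mulmxA -scalar_mxC mulmxA PiPp mul1mx.
rewrite !det_mulmx mulrC mulrA -det_mulmx.
by rewrite -map_mxM mulmxV // map_mx1 det1 mul1r.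
Qed.

Section Inertia.
Variable C : numClosedFieldType.
Local Open Scope sesquilinear_scope.

Definition qform n (A : 'M[C]_n) (x : 'rV[C]_n) : C := (x *m A *m x ^t*) 0 0.

(* Used with [eps = 1] and [eps = -1], so that one notion covers positive and
   negative definiteness on the row space of [V]. *)
Definition positive_span (eps : C) n r (A : 'M[C]_n) (V : 'M[C]_(r, n)) :=
  forall z : 'rV_r, z != 0 -> 0 < eps * qform A (z *m V).

Definition nonpositive_span (eps : C) n s (A : 'M[C]_n) (W : 'M[C]_(s, n)) :=
  row_free W /\ forall z : 'rV_s, eps * qform A (z *m W) <= 0.

Lemma qform0 n (A : 'M[C]_n) : qform A 0 = 0.
Proof. by rewrite /qform !mul0mx mxE. Qed.

Lemma positive_nonpositive_span_rank eps n r s (A : 'M[C]_n)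
    (V : 'M_(r, n)) (W : 'M_(s, n)) :
  positive_span eps A V -> nonpositive_span eps A W -> (r + s <= n)%N.
Proof.
move=> posV [W_free nposW].
have V_free : row_free V.
  apply: inj_row_free => z zV; apply/eqP/negP => /negP /posV.
  by rewrite zV qform0 mulr0 ltxx.
have VW0 : (V :&: W)%MS = 0.
  apply/eqP; rewrite -submx0; apply/row_subP => i.
  have /submxP[z xV] := submx_trans (row_sub i _) (capmxSl V W).
  have /submxP[z' xW] := submx_trans (row_sub i _) (capmxSr V W).
  rewrite submx0; apply: contraT => x0.
  have z0 : z != 0 by apply: contra x0 => /eqP z0; rewrite xV z0 mul0mx.
  by have := posV z z0; rewrite -xV xW => /lt_le_trans/(_ (nposW z')); rewrite ltxx.
have := mxrank_disjoint_sum VW0.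
by rewrite (eqP V_free) (eqP W_free) => <-; apply: rank_leq_col.
Qed.

Section Congruence.
Variables (n k : nat) (A : 'M[C]_n) (M : 'M[C]_k) (B : 'M[C]_(n, k)).
Hypothesis AM : A = B *m M *m B ^t*.

Lemma qform_congr x : qform A x = qform M (x *m B).
Proof. by rewrite /qform AM trmx_mul map_mxM !mulmxA. Qed.

Lemma positive_span_congr eps r (V : 'M_(r, n)) :
  positive_span eps A V -> positive_span eps M (V *m B).
Proof. by move=> posV z /posV; rewrite qform_congr mulmxA. Qed.

Lemma positive_span_congr_pinv eps r (V : 'M_(r, k)) :
  B ^t* *m B \in unitmx ->
  positive_span eps M V -> positive_span eps A (V *m invmx (B ^t* *m B) *m B ^t*).
Proof.
move=> gram_unit posV z /posV; rewrite qform_congr !mulmxA -(mulmxA _ (B ^t*)).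
by rewrite -(mulmxA _ _ (B ^t* *m B)) mulVmx // mulmx1.
Qed.

End Congruence.

Definition select_mx n (T : {set 'I_n}) : 'M[C]_(#|T|, n) :=
  \matrix_(i, j) (enum_val i == j)%:R.

Lemma select_mx_diag n (T : {set 'I_n}) (d : 'rV[C]_n) :
  select_mx T *m diag_mx d *m (select_mx T) ^t* = diag_mx (\row_i d 0 (enum_val i)).
Proof.
apply/matrixP => i i'; rewrite mul_mx_diag !mxE (bigD1 (enum_val i)) //= big1 ?addr0.
  rewrite !mxE !eqxx mul1r (inj_eq enum_val_inj) eq_sym.
  by case: eqP => _; rewrite ?conjC1 ?conjC0 ?mulr1 ?mulr0.
by move=> j /negbTE ij; rewrite !mxE eq_sym ij !mul0r.
Qed.

Lemma select_mx_row_free n (T : {set 'I_n}) : row_free (select_mx T).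
Proof.
apply/row_freeP; exists (diag_mx (const_mx 1) *m (select_mx T) ^t*).
rewrite mulmxA select_mx_diag -diag_const_mx; congr diag_mx.
by apply/rowP => i; rewrite !mxE.
Qed.

Lemma qform_diag n (d : 'rV[C]_n) w :
  qform (diag_mx d) w = \sum_j d 0 j * (w 0 j * (w 0 j)^*).
Proof.
rewrite /qform mul_mx_diag !mxE; apply: eq_bigr => j _.
by rewrite !mxE mulrCA mulrA.
Qed.

Section Spectral.
Variables (n : nat) (A : 'M[C]_n) (eps : C).
Hypotheses (A_herm : A \is hermsymmx) (eps_real : eps \is Num.real).
Local Notation P := (spectralmx A).
Local Notation d := (spectral_diag A).

Lemma spectral_decomposition : A = invmx P *m diag_mx d *m P.
Proof. exact/orthomx_spectralP/hermitian_normalmx. Qed.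

Lemma spectral_diag_real j : d 0 j \is Num.real.
Proof. by have /mxOverP := hermitian_spectral_diag_real A_herm; apply. Qed.

Lemma char_poly_spectral : char_poly A = \prod_(j < n) ('X - (d 0 j)%:P).
Proof.
rewrite {1}spectral_decomposition char_poly_conjmx ?spectral_unit //.
rewrite char_poly_trig ?diag_mx_is_trig //.
by apply: eq_bigr => j _; rewrite mxE eqxx mulr1n.
Qed.

Lemma qform_spectral w : qform A (w *m P) = qform (diag_mx d) w.
Proof.
move: (spectral_unitarymx A) spectral_decomposition.
move: P d => P0 d0 P_unitary ->; rewrite /qform (invmx_unitary P_unitary).
by rewrite trmx_mul map_mxM !mulmxA !mulmxtVK.
Qed.

Lemma qform_select_spectral (T : {set 'I_n}) z :
  qform A (z *m (select_mx T *m P)) =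
  \sum_i d 0 (enum_val i) * (z 0 i * (z 0 i)^*).
Proof.
rewrite mulmxA qform_spectral /qform trmx_mul map_mxM !mulmxA.
rewrite -(mulmxA _ _ (select_mx T ^t*)) -(mulmxA z (select_mx T)).
rewrite (mulmxA (select_mx T)) select_mx_diag -[LHS]/(qform _ z) qform_diag.
by apply: eq_bigr => i _; rewrite mxE.
Qed.

Definition eps_positive := [set j | 0 < eps * d 0 j].

Lemma positive_span_spectral : positive_span eps A (select_mx eps_positive *m P).
Proof.
move=> z /rV0Pn[i0 zi0]; rewrite qform_select_spectral mulr_sumr (bigD1 i0) //=.
have pos (i : 'I_#|eps_positive|) : 0 < eps * d 0 (enum_val i).
  by have := enum_valP i; rewrite inE.
apply: ltr_pwDl; first by rewrite mulrA mulr_gt0 ?pos // mul_conjC_gt0.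
by apply: sumr_ge0 => i _; rewrite mulrA mulr_ge0 ?mul_conjC_ge0 // ltW.
Qed.

Lemma nonpositive_span_spectral :
  nonpositive_span eps A (select_mx (~: eps_positive) *m P).
Proof.
split.
  by rewrite /row_free mxrankMfree ?(eqP (select_mx_row_free _)) ?row_free_unit
    ?spectral_unit.
move=> z; rewrite qform_select_spectral mulr_sumr; apply: sumr_le0 => i _.
have /[!inE] not_pos := enum_valP i.
rewrite mulrA mulr_le0_ge0 ?mul_conjC_ge0 //.
by rewrite real_leNgt ?not_pos ?rpredM ?spectral_diag_real ?real0.
Qed.

Lemma card_eps_positive (s : seq C) : char_poly A = \prod_(x <- s) ('X - x%:P) ->
  #|eps_positive| = count (fun x => 0 < eps * x) s.
Proof.
move=> As; have : perm_eq s [seq d 0 j | j <- enum 'I_n].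
  by apply: prod_XsubC_eq; rewrite -As char_poly_spectral big_map big_enum.
move/permP => ->; rewrite count_map enumT cardsE cardE /enum_mem size_filter.
exact: eq_count.
Qed.

Lemma positive_span_rank_le (s : seq C) r (V : 'M_(r, n)) :
  char_poly A = \prod_(x <- s) ('X - x%:P) ->
  positive_span eps A V -> (r <= count (fun x => (0 < eps * x)%R) s)%N.
Proof.
move=> As posV; rewrite -(leq_add2r #|~: eps_positive|).
have := cardsC eps_positive; rewrite card_ord (card_eps_positive As) => ->.
exact: positive_nonpositive_span_rank posV nonpositive_span_spectral.
Qed.

End Spectral.

Lemma congr_count_eps_positive n k (A : 'M[C]_n) (M : 'M[C]_k) (B : 'M[C]_(n, k))
    (sA sM : seq C) (eps : C) :
  A \is hermsymmx -> M \is hermsymmx -> eps \is Num.real ->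
  A = B *m M *m B ^t* -> B ^t* *m B \in unitmx ->
  char_poly A = \prod_(x <- sA) ('X - x%:P) ->
  char_poly M = \prod_(x <- sM) ('X - x%:P) ->
  count (fun x => 0 < eps * x) sA = count (fun x => 0 < eps * x) sM.
Proof.
move=> A_herm M_herm eps_real AM gram_unit As Ms.
apply/eqP; rewrite eqn_leq; apply/andP; split.
  rewrite -(card_eps_positive eps A_herm As).
  exact: (positive_span_rank_le M_herm eps_real Ms
    (positive_span_congr AM (positive_span_spectral A_herm))).
rewrite -(card_eps_positive eps M_herm Ms).
exact: (positive_span_rank_le A_herm eps_real As
  (positive_span_congr_pinv AM gram_unit (positive_span_spectral M_herm))).
Qed.

End Inertia.

Section RealSymmetric.
Variable R : rcfType.
Local Notation toC := (real_complex R).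
Local Open Scope sesquilinear_scope.

Lemma conjmx_map_real m n (A : 'M[R]_(m, n)) : (map_mx toC A) ^t* = map_mx toC A^T.
Proof.
apply/matrixP => i j; rewrite !mxE; apply: conj_Creal.
by apply/complex_realP; exists (A j i).
Qed.

Lemma sym_hermsymmx_map_real n (M : 'M[R]_n) :
  M^T = M -> map_mx toC M \is hermsymmx.
Proof.
by move=> M_sym; apply/is_hermitianmxP; rewrite expr0 scale1r conjmx_map_real M_sym.
Qed.

Lemma char_poly_map_real n (A : 'M[R]_n) s :
  char_poly A = \prod_(x <- s) ('X - x%:P) ->
  char_poly (map_mx toC A) = \prod_(y <- map toC s) ('X - y%:P).
Proof.
move=> As; rewrite -map_char_poly As rmorph_prod big_map.
by apply: eq_bigr => x _; apply: map_polyXsubC.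
Qed.

Lemma sym_char_poly_split n (M : 'M[R]_n) : M^T = M ->
  exists s : seq R, char_poly M = \prod_(x <- s) ('X - x%:P).
Proof.
move=> M_sym; have M_herm := sym_hermsymmx_map_real M_sym.
exists [seq complex.Re (spectral_diag (map_mx toC M) 0 j) | j <- enum 'I_n].
apply: (@map_poly_inj _ _ toC); rewrite map_char_poly char_poly_spectral //.
rewrite rmorph_prod big_map big_enum; apply: eq_bigr => j _ /=.
set dj := spectral_diag _ 0 j.
have -> : map_poly toC ('X - (complex.Re dj)%:P) = 'X - (toC (complex.Re dj))%:P.
  exact: map_polyXsubC.
by rewrite RRe_real // spectral_diag_real.
Qed.

Lemma count_map_real (eps : R) s :
  count (fun y => 0 < toC eps * y) (map toC s) = count (fun x => 0 < eps * x) s.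
Proof. by rewrite count_map; apply: eq_count => x /=; rewrite -rmorphM -ltcR. Qed.

Lemma congr_count_sign (eps : R) n k (L : 'M[R]_n) (M : 'M[R]_k)
    (B : 'M[R]_(n, k)) (sL sM : seq R) :
  M^T = M -> row_free B^T -> L = B *m M *m B^T ->
  char_poly L = \prod_(x <- sL) ('X - x%:P) ->
  char_poly M = \prod_(x <- sM) ('X - x%:P) ->
  count (fun x => 0 < eps * x) sL = count (fun x => 0 < eps * x) sM.
Proof.
move=> M_sym B_free LM Ls Ms; rewrite -!count_map_real.
have L_sym : L^T = L by rewrite LM !trmx_mul trmxK M_sym mulmxA.
have LM_C : map_mx toC L = map_mx toC B *m map_mx toC M *m (map_mx toC B)^t*.
  by rewrite conjmx_map_real LM !map_mxM.
apply: congr_count_eps_positive (sym_hermsymmx_map_real L_sym)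
  (sym_hermsymmx_map_real M_sym) _ LM_C _ (char_poly_map_real Ls)
  (char_poly_map_real Ms).
- by apply/complex_realP; exists eps.
- by rewrite conjmx_map_real -map_mxM map_unitmx gram_unitmx.
Qed.

End RealSymmetric.

Lemma count_sign_partition (R : realDomainType) (s : seq R) :
  (count (fun x => 0 < x)%R s + count (fun x => x < 0)%R s +
   count (fun x => x == 0%R) s)%N = size s.
Proof. by elim: s => //= x s IHs; case: (ltrgtP x 0) => /= _; rewrite -IHs; lia. Qed.

Lemma congr_eig_inertia (R : rcfType) n k (L : 'M[R]_n) (M : 'M[R]_k)
    (B : 'M[R]_(n, k)) np nn nz :
  M^T = M -> row_free B^T -> L = B *m M *m B^T ->
  eig_inertia L np nn nz -> eig_inertia M np nn (nz - (n - k)).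
Proof.
move=> M_sym B_free LM [sL [Ls posL negL zeroL]].
have [sM Ms] := sym_char_poly_split M_sym.
have count_sign eps := congr_count_sign eps M_sym B_free LM Ls Ms.
have count_pos s : count (fun x : R => 0 < x) s = count (fun x => 0 < 1 * x) s.
  by apply: eq_count => x; rewrite mul1r.
have count_neg s : count (fun x : R => x < 0) s = count (fun x => 0 < -1 * x) s.
  by apply: eq_count => x; rewrite mulN1r oppr_gt0.
have posM : count (fun x => 0 < x) sM = np.
  by rewrite count_pos -count_sign -count_pos.
have negM : count (fun x => x < 0) sM = nn.
  by rewrite count_neg -count_sign -count_neg.
have size_L : size sL = n.
  by have := size_char_poly L; rewrite Ls size_prod_XsubC => -[].
have size_M : size sM = k.
  by have := size_char_poly M; rewrite Ms size_prod_XsubC => -[].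
have k_le_n : (k <= n)%N by rewrite -(eqP B_free) rank_leq_col.
exists sM; split=> //.
have := count_sign_partition sL; have := count_sign_partition sM.
rewrite posL negL zeroL posM negM size_L size_M.
move: k_le_n; set z := count _ sM; lia.
Qed.

Theorem corollary2 (R : rcfType) (n k l : nat)
  (src dst : 'I_(k + l) -> 'I_n) (w : 'I_(k + l) -> R)
  (c np nn nz : nat) :
  (forall e, src e != dst e) ->
  (forall e, w e != 0) ->
  c = n_comp (adj src dst predT) predT ->
  ~ has_cycle src dst (fun e => (e < k)%N) ->
  (forall x y, connect (adj src dst (fun e => (e < k)%N)) x y =
               connect (adj src dst predT) x y) ->
  let E : 'M[R]_(n, k + l) := incidence src dst R in
  let W : 'M[R]_(k + l) := diag_mx (\row_j w j) in
  let EF := lsubmx E in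
  let EC := rsubmx E in
  let RFC : 'M[R]_(k, k + l) :=
      row_mx 1%:M (invmx (EF^T *m EF) *m EF^T *m EC) in
  eig_inertia (E *m W *m E^T) np nn nz ->
  eig_inertia (RFC *m W *m RFC^T) np nn (nz - c).
Proof.
(* The weights need not be nonzero: the argument works for any symmetric [W]. *)
move=> loop_free _ c_def acyclic spanning E W EF EC RFC L_inertia.
have EF_free : row_free EF^T.
  rewrite /EF lsubmx_incidence; apply: acyclic_incidence_tr_row_free.
    by move=> e; apply: loop_free.
  by move/has_cycle_lshift.
have EC_EF : (EC^T <= EF^T)%MS := spanning_forest_rsubmx_incidence_sub R spanning.
have E_factor : E = EF *m RFC by rewrite -row_mx_pinv_factor // hsubmxK.
have rank_E : \rank E = k.
  by rewrite -[E]hsubmxK rank_row_mx_sub // -mxrank_tr (eqP EF_free).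
have -> : c = (n - k)%N.
  have c_le_n : (c <= n)%N by rewrite c_def (leq_trans (max_card _)) ?card_ord.
  by move: (rank_incidence R src dst); rewrite rank_E -c_def; lia.
have L_factor : E *m W *m E^T = EF *m (RFC *m W *m RFC^T) *m EF^T.
  by rewrite E_factor !trmx_mul !mulmxA.
apply: congr_eig_inertia EF_free L_factor L_inertia.
by rewrite !trmx_mul trmxK tr_diag_mx mulmxA.
Qed.
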